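(* Let $\rho$ be a congruence on $\mathcal{OR}_n$ and let $\sigma\in\mathcal{OR}_n$ with $\mathrm{rk}(\sigma)=k$. Suppose there exists $\tau\in\mathcal{OR}_n$ with $\tau\neq\sigma$ and $\tau\,\rho\,\sigma$. Then: if $k=n$, $\rho(0)\supseteq\mathcal I_m^{\rm I}$ or $\rho(0)\supseteq\mathcal I_m^{\rm II}$; if $0\le k\le m$, $\rho(0)\supseteq\mathcal I_{k-1}$, where $\mathcal I_{-1}=\emptyset$.
   Context: Let $m\ge 1$, $n=2m$, $\mathbf n=\{1,\dots,n\}$, $\theta(i)=n+1-i$, written $\bar i$. A proper subset $I\subset\mathbf n$ is admissible if $I\cap\theta(I)=\emptyset$; $\mathbf n$ and $\emptyset$ are also admissible. For an injective partial map $\sigma$ of $\mathbf n$, $I(\sigma)$ is its domain, $J(\sigma)$ its image, $\mathrm{rk}(\sigma)=|I(\sigma)|$; products are compositions of partial maps. $W=\{\sigma\in S_n:\sigma(\bar i)=\overline{\sigma(i)}\ \forall i\}$, $W'=\{\sigma\in W:|\sigma(\{1,\dots,m\})\cap\{m+1,\dots,n\}|\text{ even}\}$. An admissible $m$-subset is of type I if it contains an even number of elements $>m$, type II otherwise. $\mathcal{OR}_n$ consists of the injective partial maps $\sigma$ with: $\mathrm{rk}(\sigma)<m$ and $I(\sigma),J(\sigma)$ admissible; or $\mathrm{rk}(\sigma)=m$ and $I(\sigma),J(\sigma)$ admissible of the same type; or $\sigma\in W'$. For $\mathrm{rk}(\sigma)=m$, $\mathrm{tp}(\sigma)$ is the type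 of $I(\sigma)$. $\mathcal I_k=\{\sigma:\mathrm{rk}(\sigma)\le k\}$ for $k\in\{0,\dots,m-1,n\}$; $\mathcal I_m^{\rm I}=\{\sigma:\mathrm{rk}(\sigma)<m$, or $\mathrm{rk}(\sigma)=m$ and $\mathrm{tp}(\sigma)={\rm I}\}$, $\mathcal I_m^{\rm II}$ likewise with type II. $0$ is the empty map and $\rho(0)$ its $\rho$-class. *)

(* Points of n = {1..n} are encoded as 'I_n (0-indexed),
   with n = m.*2; the point i (1-indexed) is the ordinal i-1. *)
From mathcomp Require Import all_boot.
Set Implicit Arguments. Unset Strict Implicit. Unset Printing Implicit Defensive.

Section Defs.
Variable m : nat.
Local Notation n := (m.*2).

Definition ptmap := {ffun 'I_n -> option 'I_n}.

(* theta(i) = n+1-i in 1-indexed form, i.e. n-1-i in 0-indexed form *)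
Definition theta (i : 'I_n) : 'I_n := rev_ord i.

Definition pinjective (s : ptmap) : bool :=
  [forall x, forall y, (s x != None) ==> (s x == s y) ==> (x == y)].

Definition dom (s : ptmap) : {set 'I_n} := [set x | s x != None].
Definition pimg (s : ptmap) (A : {set 'I_n}) : {set 'I_n} :=
  [set y | [exists x in A, s x == Some y]].
Definition img (s : ptmap) : {set 'I_n} := pimg s setT.
Definition rk (s : ptmap) : nat := #|dom s|.

(* composition of partial maps: first s, then t *)
Definition pmul (s t : ptmap) : ptmap :=
  [ffun x => if s x is Some y then t y else None].

Definition empty_map : ptmap := [ffun _ => None].

(* admissible: the whole set, or I ∩ θ(I) = ∅ (this includes ∅; such an I
   is automatically proper since n >= 2 under m >= 1) *)
Definition admissible (I : {set 'I_n}) : bool :=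
  (I == setT) || [disjoint I & theta @: I].

(* elements > m (1-indexed) are the ordinals with value >= m *)
Definition upper (I : {set 'I_n}) : {set 'I_n} := [set x in I | m <= x].

Definition typeI (I : {set 'I_n}) : bool := ~~ odd #|upper I|.

Definition lowerhalf : {set 'I_n} := [set x : 'I_n | x < m].

Definition inW (s : ptmap) : bool :=
  [forall x, s x != None] && pinjective s &&
  [forall i, s (theta i) == omap theta (s i)].

Definition inW' (s : ptmap) : bool :=
  inW s && ~~ odd #|upper (pimg s lowerhalf)|.

Definition inOR (s : ptmap) : bool :=
  pinjective s &&
  [|| (rk s < m) && admissible (dom s) && admissible (img s),
      [&& rk s == m, admissible (dom s), admissible (img s)
        & typeI (dom s) == typeI (img s)]
    | inW' s].

Definition congruence_OR (rho : ptmap -> ptmap -> Prop) : Prop :=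
  [/\ forall a b, rho a b -> inOR a /\ inOR b,
      forall a, inOR a -> rho a a,
      forall a b, rho a b -> rho b a,
      forall a b c, rho a b -> rho b c -> rho a c
    & forall a b c, rho a b -> inOR c ->
        rho (pmul c a) (pmul c b) /\ rho (pmul a c) (pmul b c)].

Definition in_Ik (k : nat) (s : ptmap) : bool := inOR s && (rk s <= k).
Definition in_ImI (s : ptmap) : bool :=
  inOR s && ((rk s < m) || ((rk s == m) && typeI (dom s))).
Definition in_ImII (s : ptmap) : bool :=
  inOR s && ((rk s < m) || ((rk s == m) && ~~ typeI (dom s))).

End Defs.

From mathcomp Require Import all_boot zify.
Set Implicit Arguments. Unset Strict Implicit. Unset Printing Implicit Defensive.

(* Since ρ(0) is an ideal, it contains every map t of rank at most rk s (of the
   same type when that rank is m) as soon as it contains s: t factors through s.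
   If ρ identifies the partial identity 1_A of a θ-free set A with a map φ whose
   restriction to A is not 1_A, pick x ∈ A not fixed by φ and y = φ(x) (any
   other y ∈ A if φ(x) is undefined); restricting both sides to A' = A∖{y} gives
   1_A' ρ ψ with x ∉ dom ψ, so by induction on |A| 1_A', hence I_{|A|-1}, lies
   in ρ(0).  For σ ρ τ with rk σ ≤ m, right multiplication by σ⁻¹ leads to this
   situation unless τ extends σ; then either τ is not total and the roles of σ
   and τ are swapped, or left multiplication by 1_{θ(dom σ)} kills σ but not τ.
   For σ of rank n, cutting σ and τ down to a θ-free m-set C that contains a
   point x where they differ and avoids σ⁻¹(τ x) yields a rank-m map in ρ(0). *)

Section PartialMaps.
Variable m : nat.
Local Notation n := m.*2.
Implicit Types (s t g : ptmap m) (A B D E : {set 'I_n}).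

Definition pid A : ptmap m := [ffun x => if x \in A then Some x else None].
Definition pinv s : ptmap m := [ffun y => [pick x | s x == Some y]].
Definition restr A B s : ptmap m := pmul (pmul (pid A) s) (pid B).

Lemma pmulE s t x : pmul s t x = if s x is Some y then t y else None.
Proof. by rewrite ffunE. Qed.

Lemma pidE A x : pid A x = if x \in A then Some x else None.
Proof. by rewrite ffunE. Qed.

Lemma restrE A B s x :
  restr A B s x = if x \in A then (if s x is Some y then pid B y else None) else None.
Proof. by rewrite !pmulE pidE; case: ifP. Qed.

Lemma domE s x : (x \in dom s) = (s x != None).
Proof. by rewrite inE. Qed.

Lemma imgP s y : reflect (exists x, s x = Some y) (y \in img s).
Proof.
rewrite inE; apply: (iffP existsP) => [[x /andP[_ /eqP]]|[x sx]]; first by exists x.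
by exists x; rewrite inE sx eqxx.
Qed.

Lemma pmulA s t g : pmul (pmul s t) g = pmul s (pmul t g).
Proof. by apply/ffunP => x; rewrite !pmulE; case: (s x) => // y; rewrite pmulE. Qed.

Lemma pmul0l s : pmul (empty_map m) s = empty_map m.
Proof. by apply/ffunP => x; rewrite pmulE !ffunE. Qed.

Lemma pmul0r s : pmul s (empty_map m) = empty_map m.
Proof. by apply/ffunP => x; rewrite pmulE !ffunE; case: (s x) => // y; rewrite ffunE. Qed.

Lemma pinjP s :
  reflect (forall x y z, s x = Some z -> s y = Some z -> x = y) (pinjective s).
Proof.
apply: (iffP forallP) => [sI x y z sx sy|sI x].
  by move/forallP/(_ y): (sI x); rewrite sx sy eqxx => /eqP.
apply/forallP => y; apply/implyP => sx; apply/implyP => /eqP sxy.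
by case E: (s x) sx sxy => [z|] // _ /esym sy; apply/eqP/(sI x y z).
Qed.

Lemma pmul_inj s t : pinjective s -> pinjective t -> pinjective (pmul s t).
Proof.
move=> /pinjP sI /pinjP tI; apply/pinjP => x y z; rewrite !pmulE.
case sx: (s x) => [u|] //; case sy: (s y) => [v|] // tu tv.
by move: sx; rewrite (tI _ _ _ tu tv) => /sI; apply.
Qed.

Lemma card_img s : pinjective s -> #|img s| = rk s.
Proof.
move=> sI; have -> : img s = (fun x => odflt x (s x)) @: dom s.
  apply/setP => y; apply/imgP/imsetP => [[x sx]|[x]].
    by exists x; rewrite ?domE sx.
  by rewrite domE; case sx: (s x) => [z|] //= _ ->; exists x.
apply: card_in_imset => x y; rewrite !domE.
case sx: (s x) => [u|] //; case sy: (s y) => [v|] //= _ _ euv.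
by move: sx; rewrite euv => /(pinjP _ sI)/(_ sy).
Qed.

Lemma rk0 s : rk s = 0 -> s = empty_map m.
Proof.
move/eqP; rewrite cards_eq0 => /eqP dom0; apply/ffunP => x; rewrite ffunE.
by apply/eqP; rewrite -[_ == _]negbK -domE dom0 inE.
Qed.

Lemma dom_pmul s t : img s \subset dom t -> dom (pmul s t) = dom s.
Proof.
move/subsetP=> st; apply/setP => x; rewrite !domE pmulE.
by case sx: (s x) => [y|] //=; rewrite -domE st //; apply/imgP; exists x.
Qed.

Lemma img_pmul_sub s t : img (pmul s t) \subset img t.
Proof.
apply/subsetP => z /imgP [x]; rewrite pmulE.
by case: (s x) => // y tz; apply/imgP; exists y.
Qed.

Lemma pid_inj A : pinjective (pid A).
Proof. by apply/pinjP => x y z; rewrite !pidE; do 2 case: ifP => //; move=> _ _ [->] [->]. Qed.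

Lemma dom_pid A : dom (pid A) = A.
Proof. by apply/setP => x; rewrite domE pidE; case: ifP. Qed.

Lemma img_pid A : img (pid A) = A.
Proof.
apply/setP => x; apply/imgP/idP => [[y]|xA]; last by exists x; rewrite pidE xA.
by rewrite pidE; case: ifP => // yA [<-].
Qed.

Lemma rk_pid A : rk (pid A) = #|A|.
Proof. by rewrite /rk dom_pid. Qed.

Lemma pmul_pid A B : pmul (pid A) (pid B) = pid (A :&: B).
Proof. by apply/ffunP => x; rewrite pmulE !pidE inE; case: (x \in A); rewrite ?pidE. Qed.

Lemma pmul_pid_dom s : pmul (pid (dom s)) s = s.
Proof. by apply/ffunP => x; rewrite pmulE pidE domE; case sx: (s x) => [y|] /=; rewrite ?sx. Qed.

Lemma pmul_pid_img s B : img s \subset B -> pmul s (pid B) = s.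
Proof.
move=> /subsetP sB; apply/ffunP => x; rewrite pmulE.
by case sx: (s x) => [y|] //; rewrite pidE sB //; apply/imgP; exists x.
Qed.

Lemma dom_restr_sub A B s : dom (restr A B s) \subset A.
Proof. by apply/subsetP => x; rewrite domE restrE; case: ifP. Qed.

Lemma restrK A B s : restr A B (restr A B s) = restr A B s.
Proof.
apply/ffunP => x; rewrite !restrE; case: (x \in A) => //.
case: (s x) => // y; rewrite !pidE; case: ifP => yB //.
by rewrite pidE yB.
Qed.

Lemma pinvP s y x : pinjective s -> pinv s y = Some x <-> s x = Some y.
Proof.
move=> sI; rewrite ffunE; case: pickP => [z /eqP sz|/(_ x) sx].
  by split=> [[<-]//|]; move/(pinjP _ sI)/(_ sz) => ->.
by split=> // /eqP; rewrite sx.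
Qed.

Lemma pinv_inj s : pinjective s -> pinjective (pinv s).
Proof.
by move=> sI; apply/pinjP => x y z /(pinvP _ _ sI) sz /(pinvP _ _ sI); rewrite sz => -[].
Qed.

Lemma dom_pinv s : pinjective s -> dom (pinv s) = img s.
Proof.
move=> sI; apply/setP => y; rewrite domE; apply/idP/imgP => [|[x /(pinvP _ _ sI) ->]//].
by case E: (pinv s y) => [x|] // _; exists x; apply/(pinvP _ _ sI).
Qed.

Lemma img_pinv s : pinjective s -> img (pinv s) = dom s.
Proof.
move=> sI; apply/setP => x; rewrite domE; apply/imgP/idP => [[y /(pinvP _ _ sI) ->]//|].
by case E: (s x) => [y|] // _; exists y; apply/(pinvP _ _ sI).
Qed.

Lemma rk_pinv s : pinjective s -> rk (pinv s) = rk s.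
Proof. by move=> sI; rewrite /rk dom_pinv // card_img. Qed.

Lemma pmul_pinv s : pinjective s -> pmul s (pinv s) = pid (dom s).
Proof.
move=> sI; apply/ffunP => x; rewrite pmulE pidE domE.
by case sx: (s x) => [y|] //=; apply/(pinvP _ _ sI).
Qed.

Lemma pinv_pmul s : pinjective s -> pmul (pinv s) s = pid (img s).
Proof.
move=> sI; apply/ffunP => y; rewrite pmulE pidE.
case E: (pinv s y) => [x|].
  by move/(pinvP _ _ sI): E => sx; rewrite sx ifT //; apply/imgP; exists x.
by case: ifP => // /imgP [x /(pinvP _ _ sI)]; rewrite E.
Qed.

Lemma rk_lt_sub s A x : dom s \subset A -> x \in A -> s x = None -> rk s < #|A|.
Proof.
move=> sA xA sx; apply: proper_card; apply/properP; split => //.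
by exists x; rewrite // domE sx.
Qed.

Lemma ffun_neq s t : s != t -> exists x, s x != t x.
Proof.
move=> ne_st; apply/existsP; apply: contraR ne_st => /existsPn eq_st.
by apply/eqP/ffunP => x; apply/eqP/negPn/eq_st.
Qed.

Lemma exists_pinj_into D E : #|D| <= #|E| ->
  exists g : ptmap m, [/\ pinjective g, dom g = D & img g \subset E].
Proof.
move=> DE; pose g : ptmap m :=
  [ffun x => if x \in D then Some (nth x (enum E) (index x (enum D))) else None].
have idx_lt x : x \in D -> index x (enum D) < size (enum E).
  by move=> xD; rewrite -cardE; apply: leq_trans DE; rewrite cardE index_mem mem_enum.
exists g; split.
- apply/pinjP => x y z; rewrite !ffunE.
  case: ifP => xD //; case: ifP => yD // [<-] [].
  rewrite (set_nth_default y x (idx_lt _ xD)) => /eqP.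
  rewrite nth_uniq ?enum_uniq ?idx_lt // => /eqP /(congr1 (nth x (enum D))).
  by rewrite !nth_index ?mem_enum.
- by apply/setP => x; rewrite domE ffunE; case: ifP.
- apply/subsetP => z /imgP [x]; rewrite ffunE; case: ifP => // xD [<-].
  by rewrite -mem_enum mem_nth ?idx_lt.
Qed.

End PartialMaps.

Section ThetaFree.
Variable m : nat.
Local Notation n := m.*2.
Implicit Types (A B C : {set 'I_n}) (i j x y : 'I_n).

Definition theta_free A := [disjoint A & @theta m @: A].

Lemma thetaK : involutive (@theta m).
Proof. exact: rev_ordK. Qed.

Lemma theta_eq i j : (theta i == j) = (i == theta j).
Proof. by rewrite -{1}(thetaK j) (can_eq thetaK). Qed.

Lemma theta_neq i : theta i != i.
Proof. by apply/negP => /eqP/(congr1 val); case: i => i /=; rewrite -addnn; lia. Qed.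

Lemma ltn_theta i : (theta i < m) = (m <= i).
Proof. by case: i => i /=; rewrite -addnn; lia. Qed.

Lemma mem_theta A i : (i \in @theta m @: A) = (theta i \in A).
Proof. by rewrite -{1}(thetaK i) (mem_imset _ _ (can_inj thetaK)). Qed.

Lemma card_theta A : #|@theta m @: A| = #|A|.
Proof. exact: (card_imset _ (can_inj thetaK)). Qed.

Lemma theta_freeP A : reflect {in A, forall i, theta i \notin A} (theta_free A).
Proof.
rewrite /theta_free disjoints_subset; apply: (iffP subsetP) => tA i iA.
  by have := tA i iA; rewrite inE mem_theta.
by rewrite inE mem_theta tA.
Qed.

Lemma theta_free_sub A B : B \subset A -> theta_free A -> theta_free B.
Proof.
move=> /subsetP BA /theta_freeP tA; apply/theta_freeP => i iB.
by apply: contra (tA i (BA i iB)); apply: BA.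
Qed.

Lemma theta_free_theta A : theta_free A -> theta_free (@theta m @: A).
Proof.
move=> /theta_freeP tA; apply/theta_freeP => i; rewrite !mem_theta thetaK => iA.
by have := tA _ iA; rewrite thetaK.
Qed.

Lemma card_setU_theta A : theta_free A -> #|A :|: @theta m @: A| = #|A|.*2.
Proof.
by move=> tA; rewrite -[#|A|.*2]addnn -{2}(card_theta A); apply/eqP; rewrite (leq_card_setU _ _).2.
Qed.

Lemma theta_free_card A : theta_free A -> #|A| <= m.
Proof.
move=> tA; rewrite -leq_double -card_setU_theta //.
by apply: leq_trans (max_card _) _; rewrite card_ord.
Qed.

Lemma theta_free_half x y : y != theta x ->
  exists C, [/\ x \in C, y \in C, theta_free C & #|C| = m].
Proof.
move=> yx; pose S := [set x; y].
(* [S] completed by the element below [m] of every θ-pair disjoint from [S] *)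
pose C := [set i | if (i \in S) || (theta i \in S) then i \in S else i < m].
have memC i : (i \in C) = if (i \in S) || (theta i \in S) then i \in S else i < m.
  by rewrite inE.
have memCt i : (theta i \in C) = if (i \in S) || (theta i \in S) then theta i \in S
                                 else m <= i.
  by rewrite memC thetaK orbC ltn_theta.
have tfC : theta_free C.
  apply/theta_freeP => i; rewrite memC memCt; case: ifP => _; last by rewrite -ltnNge.
  rewrite !inE => /orP[] /eqP ->; rewrite (negbTE (theta_neq _)) /=; first by rewrite eq_sym.
  by rewrite orbF theta_eq.
exists C; split => //; [by rewrite memC !inE eqxx | by rewrite memC !inE eqxx orbT|].
apply: double_inj; rewrite -card_setU_theta //.
have -> : C :|: @theta m @: C = setT.
  apply/setP => i; rewrite in_setU mem_theta memC memCt in_setT.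
  by case: ifP => [-> //|_]; lia.
by rewrite cardsT card_ord.
Qed.

End ThetaFree.

Section Membership.
Variable m : nat.
Local Notation n := m.*2.
Implicit Types (s : ptmap m) (A : {set 'I_n}).

Lemma rk_full s : (rk s == n) = [forall x, s x != None].
Proof.
apply/eqP/forallP => [rk_s x | full].
  have dom_s : dom s = setT.
    by apply/eqP; rewrite eqEcard subsetT cardsT card_ord -/(rk s) rk_s leqnn.
  by move: (in_setT x); rewrite -dom_s domE.
have dom_s : dom s = setT by apply/setP => x; rewrite domE full inE.
by rewrite /rk dom_s cardsT card_ord.
Qed.

Lemma inOR_rk_le s : inOR s -> ~~ [forall x, s x != None] -> rk s <= m.
Proof.
case/andP=> _ /or3P[/andP[/andP[/ltnW //]]|/and4P[/eqP -> //]|].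
by case/andP=> /andP[/andP[->]].
Qed.

Hypothesis m_gt0 : 0 < m.

Lemma admissibleE A : #|A| < n -> admissible A = theta_free A.
Proof.
move=> An; rewrite /admissible orb_idl // => /eqP AT.
by move: An; rewrite AT cardsT card_ord ltnn.
Qed.

Lemma inOR_smallE s : rk s <= m -> inOR s =
  [&& pinjective s, theta_free (dom s), theta_free (img s)
    & (rk s == m) ==> (typeI (dom s) == typeI (img s))].
Proof.
move=> rk_s; rewrite /inOR; case: (boolP (pinjective s)) => //= sI.
have rk_lt : rk s < n by rewrite -addnn; lia.
rewrite !admissibleE ?card_img //.
have -> : inW' s = false.
  apply: contraTF rk_lt => /andP[/andP[/andP[full _] _] _].
  by move: full; rewrite -rk_full => /eqP ->; rewrite ltnn.
by rewrite orbF; case: (ltngtP (rk s) m) rk_s => //= _ _; rewrite ?orbF ?andbT.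
Qed.

Lemma inOR_pid A : theta_free A -> inOR (pid A).
Proof.
move=> tA; rewrite inOR_smallE ?rk_pid ?theta_free_card //.
by rewrite pid_inj dom_pid img_pid tA eqxx implybT.
Qed.

Lemma inOR_pinv s : inOR s -> rk s <= m -> inOR (pinv s).
Proof.
move=> sOR rk_s; have sI : pinjective s by case/andP: sOR.
move: sOR; rewrite !inOR_smallE ?rk_pinv // pinv_inj // dom_pinv // img_pinv //.
by case/and4P=> _ -> -> ty; rewrite (eq_sym (typeI _)).
Qed.

End Membership.

Section Congruence.
Variables (m : nat) (rho : ptmap m -> ptmap m -> Prop).
Hypotheses (m_gt0 : 0 < m) (rhoC : congruence_OR rho).
Local Notation n := m.*2.
Implicit Types (s t a b c phi : ptmap m) (A B : {set 'I_n}).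

Lemma rho_inOR a b : rho a b -> inOR a /\ inOR b.
Proof. by case: rhoC => + _ _ _ _; apply. Qed.

Lemma rho_refl a : inOR a -> rho a a.
Proof. by case: rhoC => _ + _ _ _; apply. Qed.

Lemma rho_sym a b : rho a b -> rho b a.
Proof. by case: rhoC => _ _ + _ _; apply. Qed.

Lemma rho_trans a b c : rho a b -> rho b c -> rho a c.
Proof. by case: rhoC => _ _ _ + _; apply. Qed.

Lemma rho_mull a b c : rho a b -> inOR c -> rho (pmul c a) (pmul c b).
Proof. by case: rhoC => _ _ _ _ mulC ab /(mulC _ _ _ ab) []. Qed.

Lemma rho_mulr a b c : rho a b -> inOR c -> rho (pmul a c) (pmul b c).
Proof. by case: rhoC => _ _ _ _ mulC ab /(mulC _ _ _ ab) []. Qed.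

Lemma rho_restr A B a b :
  theta_free A -> theta_free B -> rho a b -> rho (restr A B a) (restr A B b).
Proof.
by move=> tA tB ab; apply: rho_mulr (inOR_pid m_gt0 tB); apply: rho_mull (inOR_pid m_gt0 tA).
Qed.

Lemma rho0_downward s t : rho s (empty_map m) -> rk s <= m -> inOR t -> rk t <= rk s ->
  (rk t == m) ==> (typeI (dom t) == typeI (dom s)) -> rho t (empty_map m).
Proof.
move=> s0 rk_s tOR rk_ts ty_ts; have rk_t : rk t <= m := leq_trans rk_ts rk_s.
have [sOR _] := rho_inOR s0.
move: (sOR) (tOR); rewrite !inOR_smallE // => /and4P[sI tf_s _ _] /and4P[_ tf_t _ _].
have [g [gI dom_g img_g]] := exists_pinj_into rk_ts.
have rk_g : rk g = rk t by rewrite /rk dom_g.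
have gOR : inOR g.
  rewrite inOR_smallE ?rk_g // gI dom_g tf_t (theta_free_sub img_g tf_s) /=.
  apply/implyP => rk_tm; have img_gE : img g = dom s.
    by apply/eqP; rewrite eqEcard img_g card_img // rk_g (eqP rk_tm).
  by rewrite img_gE (implyP ty_ts).
(* [t = (g s) (g s)^-1 t] *)
pose mu := pmul g s.
have mu0 : rho mu (empty_map m) by rewrite -(pmul0r g); apply: rho_mull.
have muI : pinjective mu := pmul_inj gI sI.
have dom_mu : dom mu = dom t by rewrite dom_pmul // dom_g.
have muOR : inOR (pinv mu).
  by apply: (inOR_pinv m_gt0 (rho_inOR mu0).1); rewrite /rk dom_mu.
rewrite -(pmul_pid_dom t) -dom_mu -pmul_pinv // -(pmul0l t).
by apply: rho_mulr tOR; rewrite -(pmul0l (pinv mu)); apply: rho_mulr.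
Qed.

Lemma rho0_pid_collapse k A phi : #|A| = k.+1 -> theta_free A -> rho (pid A) phi ->
  restr A A phi != pid A -> forall t, inOR t -> rk t <= k -> rho t (empty_map m).
Proof.
elim: k A phi => [|k IH] A phi card_A tf_A A_phi ne_phi t tOR rk_t.
  have t0 : t = empty_map m by apply/rk0/eqP; rewrite -leqn0.
  by rewrite -t0; apply: rho_refl.
have [x ne_x] := ffun_neq ne_phi.
have xA : x \in A by apply: contraR ne_x => xA; rewrite restrE pidE (negbTE xA).
have [y [yA yx phi_xy]] : exists y, [/\ y \in A, y != x &
    forall z, restr A A phi x = Some z -> z = y].
  case E: (restr A A phi x) => [z|].
    exists z; split=> [||w [] //].
      by move: E; rewrite restrE xA; case: (phi x) => // w; rewrite pidE; case: ifP => // wA [<-].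
    by apply: contraNneq ne_x => zx; rewrite E pidE xA zx.
  have : 0 < #|A :\ x| by move: card_A; rewrite (cardsD1 x A) xA add1n => -[->].
  by rewrite card_gt0 => /set0Pn [y]; rewrite !inE => /andP[yx yA]; exists y.
pose A' := A :\ y.
have A'A : A' \subset A := subD1set A y.
have xA' : x \in A' by rewrite !inE eq_sym yx.
have tf_A' : theta_free A' := theta_free_sub A'A tf_A.
pose psi := restr A' A' phi.
have A'_psi : rho (pid A') psi.
  have -> : pid A' = restr A' A' (pid A).
    by rewrite /restr !pmul_pid setIAC setIid (setIidPl A'A).
  exact: rho_restr.
have psi_x : psi x = None.
  move: phi_xy; rewrite /psi !restrE xA xA'.
  case: (phi x) => // w /(_ w); rewrite !pidE !inE.
  by case: (w \in A) => [/(_ erefl) ->|]; rewrite ?eqxx ?andbF.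
have card_A' : #|A'| = k.+1 by move: card_A; rewrite (cardsD1 y A) yA add1n => -[].
have rk_psi : rk psi <= k.
  by rewrite -ltnS -card_A'; apply: rk_lt_sub (dom_restr_sub _ _ _) xA' psi_x.
have A'0 : rho (pid A') (empty_map m).
  apply: rho_trans A'_psi (IH A' psi card_A' tf_A' A'_psi _ psi (rho_inOR A'_psi).2 rk_psi).
  by rewrite restrK; apply/eqP => /ffunP/(_ x); rewrite psi_x pidE xA'.
have lt_km : k.+1 < m by rewrite -card_A theta_free_card.
apply: (rho0_downward A'0); rewrite ?rk_pid ?card_A' ?(ltnW lt_km) //.
by rewrite ltn_eqF //; apply: leq_ltn_trans rk_t lt_km.
Qed.

Lemma rho0_restr_neq sigma tau : rho sigma tau ->
  restr (dom sigma) (img sigma) tau != sigma -> rk sigma <= m ->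
  forall t, inOR t -> rk t < rk sigma -> rho t (empty_map m).
Proof.
move=> st ne_st rk_s t tOR; have [sOR _] := rho_inOR st.
move: (sOR); rewrite inOR_smallE // => /and4P[sI tf_dom _ _].
set A := dom sigma; set phi := pmul tau (pinv sigma).
have restr_phi : restr A A phi = pmul (pmul (pid A) tau) (pinv sigma).
  rewrite /restr pmul_pid_img ?pmulA //; apply: subset_trans (img_pmul_sub _ _) _.
  by rewrite (subset_trans (img_pmul_sub _ _)) // img_pinv.
case rk_sE : (rk sigma) => [//|k] rk_t.
apply: (rho0_pid_collapse rk_sE tf_dom _ _ tOR rk_t).
  by rewrite -pmul_pinv //; apply: rho_mulr st (inOR_pinv m_gt0 sOR rk_s).
apply: contraNneq ne_st => phi_id; apply/eqP.
have := congr1 (fun f => pmul f sigma) phi_id.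
by rewrite restr_phi pmulA pinv_pmul // pmul_pid_dom.
Qed.

Lemma rho0_small sigma tau : rho sigma tau -> sigma != tau -> rk sigma <= m ->
  forall t, inOR t -> rk t < rk sigma -> rho t (empty_map m).
Proof.
move=> st ne_st rk_s t tOR rk_t; have [sOR tauOR] := rho_inOR st.
move: (sOR); rewrite inOR_smallE // => /and4P[_ tf_dom _ _].
case: (eqVneq (restr (dom sigma) (img sigma) tau) sigma) => [restr_tau|]; last first.
  move=> ne_restr; exact: (rho0_restr_neq st ne_restr rk_s tOR rk_t).
have sub_tau x y : sigma x = Some y -> tau x = Some y.
  rewrite -restr_tau restrE; case: ifP => // _.
  by case: (tau x) => // w; rewrite pidE; case: ifP => // _ [->].
have [z ne_z] := ffun_neq ne_st.
have sz : sigma z = None.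
  by case E: (sigma z) ne_z => [y|//]; rewrite (sub_tau _ _ E) eqxx.
have tz : tau z != None by rewrite sz eq_sym in ne_z.
case: (boolP [forall x, tau x != None]) => [/forallP full | not_full].
  set TA := @theta m @: dom sigma; set u := pmul (pid TA) tau.
  have u0 : rho u (empty_map m).
    have <- : pmul (pid TA) sigma = empty_map m.
      apply/ffunP => x; rewrite pmulE pidE ffunE mem_theta.
      case: ifP => // /(theta_freeP _ tf_dom).
      by rewrite thetaK domE negbK => /eqP.
    exact/rho_sym/rho_mull/(inOR_pid m_gt0)/theta_free_theta.
  have rk_u : rk u = rk sigma.
    rewrite /rk dom_pmul ?dom_pid ?card_theta // img_pid.
    by apply/subsetP => x _; rewrite domE.
  apply: (rho0_downward u0); rewrite ?rk_u ?(ltnW rk_t) //.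
  by rewrite ltn_eqF //; apply: leq_trans rk_t rk_s.
have rk_tau := inOR_rk_le tauOR not_full.
apply: (rho0_restr_neq (rho_sym st) _ rk_tau tOR).
  by apply/eqP => /ffunP/(_ z); rewrite restrE sz if_same => /esym/eqP; apply/negP.
apply: ltn_trans rk_t (rk_lt_sub _ _ sz); last by rewrite domE.
by apply/subsetP => x; rewrite !domE; case E: (sigma x) => [y|//]; rewrite (sub_tau _ _ E).
Qed.

Lemma rho0_full sigma tau : rho sigma tau -> sigma != tau -> rk sigma = n ->
  exists2 a, rho a (empty_map m) & rk a = m.
Proof.
move=> st ne_st /eqP; rewrite rk_full => /forallP full.
have [sOR _] := rho_inOR st; have sI : pinjective sigma by case/andP: sOR.
have [x ne_x] := ffun_neq ne_st.
have [C [xC tf_C card_C avoid]] : exists C : {set 'I_n}, [/\ x \in C, theta_free C, #|C| = m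
    & forall i, i \in C -> sigma i != tau x].
  case: (boolP [exists y, sigma y == tau x]) => [/existsP[y /eqP sy]|/existsPn none].
    have yx : theta y != theta x.
      by rewrite (can_eq (@thetaK m)); apply: contraNneq ne_x => yx; rewrite -sy yx.
    have [C [xC tyC tf_C card_C]] := theta_free_half yx.
    exists C; split=> // c cC; rewrite -sy; apply: contraTneq tyC => sc.
    case sy': (sigma y) (full y) => [w|//] _; rewrite sy' in sc.
    by rewrite -((pinjP _ sI) _ _ _ sc sy'); apply: (theta_freeP _ tf_C).
  have x_tx : x != theta x by rewrite eq_sym theta_neq.
  have [C [xC _ tf_C card_C]] := theta_free_half x_tx.
  by exists C; split=> // c _; apply: none.
set a := pmul (pid C) sigma.
have a_OR : inOR a := (rho_inOR (rho_mull st (inOR_pid m_gt0 tf_C))).1.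
have dom_a : dom a = C.
  by rewrite dom_pmul ?dom_pid // img_pid; apply/subsetP => c _; rewrite domE.
have rk_a : rk a = m by rewrite /rk dom_a.
move: (a_OR); rewrite inOR_smallE ?rk_a // => /and4P[_ _ tf_img _].
set b := restr C (img a) tau.
have ab : rho a b by have := rho_restr tf_C tf_img st; rewrite {1}/restr -/a pmul_pid_img.
have b_x : b x = None.
  rewrite restrE xC; case E: (tau x) => [w|//]; rewrite pidE.
  case: ifP => // /imgP [c]; rewrite pmulE pidE; case: ifP => // cC sc.
  by move: (avoid c cC); rewrite sc E eqxx.
exists a => //; apply: (rho_trans ab (rho0_small ab _ _ (rho_inOR ab).2 _)).
- by apply/eqP => /ffunP/(_ x) ax; move: xC; rewrite -dom_a domE ax b_x eqxx.
- by rewrite rk_a.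
- by apply: leq_trans (rk_lt_sub (dom_restr_sub _ _ _) xC b_x) _; rewrite card_C rk_a.
Qed.

End Congruence.

Theorem lemma4p8 (m : nat) (hm : 0 < m) (rho : ptmap m -> ptmap m -> Prop)
  (hrho : congruence_OR rho) (sigma tau : ptmap m) :
  inOR sigma -> inOR tau -> tau <> sigma -> rho tau sigma ->
  (rk sigma = m.*2 ->
     (forall t, in_ImI t -> rho t (empty_map m)) \/
     (forall t, in_ImII t -> rho t (empty_map m))) /\
  (rk sigma <= m ->
     (* rho(0) contains I_{k-1}, with I_{-1} empty *)
     forall t, inOR t -> rk t < rk sigma -> rho t (empty_map m)).
Proof.
move=> _ _ ne_ts ts; have st := rho_sym hrho ts.
have ne_st : sigma != tau by apply/eqP => /esym.
split=> [rk_s|rk_s t tOR]; last exact: (rho0_small hm hrho st ne_st rk_s tOR).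
have [a a0 rk_a] := rho0_full hm hrho st ne_st rk_s.
have ideal_a t : inOR t ->
    (rk t < m) || (rk t == m) && (typeI (dom t) == typeI (dom a)) -> rho t (empty_map m).
  move=> tOR rk_ty; apply: (rho0_downward hm hrho a0); rewrite ?rk_a //.
    by case/orP: rk_ty => [/ltnW|/andP[/eqP ->]].
  by case/orP: rk_ty => [/ltn_eqF ->|/andP[_ ->]]; rewrite ?implybT.
case: (boolP (typeI (dom a))) => ty_a; [left|right] => t /andP[tOR rk_ty].
  by apply: ideal_a; rewrite ?ty_a ?eqb_id.
by apply: ideal_a; rewrite ?(negbTE ty_a) ?eqbF_neg.
Qed.
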